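(* Let $\Sigma_1\subset E(1,1)$ be a regular surface. At every non-characteristic point of $\Sigma_1$, the Riemannian mean curvature $\mathcal H_L$ of $\Sigma_1$ in $(E(1,1),g_L)$ satisfies $$\lim_{L\to+\infty}\mathcal H_L=X_1(\bar p)+X_2(\bar q).$$
   Context: $E(1,1)$ is modelled on $\mathbb R^3$ with coordinates $(x_1,x_2,x_3)$ and vector fields $X_1=\partial_{x_3}$, $X_2=\frac{1}{\sqrt2}(-e^{x_3}\partial_{x_1}+e^{-x_3}\partial_{x_2})$, $X_3=-\frac1{\sqrt2}(e^{x_3}\partial_{x_1}+e^{-x_3}\partial_{x_2})$, dual forms $\omega_1=dx_3$, $\omega_2=\frac1{\sqrt2}(-e^{-x_3}dx_1+e^{x_3}dx_2)$, $\omega=-\frac1{\sqrt2}(e^{-x_3}dx_1+e^{x_3}dx_2)$. For $L>0$, $g_L=\omega_1\otimes\omega_1+\omega_2\otimes\omega_2+L\,\omega\otimes\omega$ (so $X_1,X_2,\widetilde X_3:=L^{-1/2}X_3$ is orthonormal), $\nabla^L$ its Levi-Civita connection. A regular surface is a Euclidean $C^2$-smooth compact oriented surface $\Sigma_1=\{u=0\}$ with $u$ Euclidean $C^2$ and nonvanishing Euclidean gradient. Put $p=X_1u$, $q=X_2u$, $r=\widetilde X_3u$, $l=\sqrt{p^2+q^2}$, $l_L=\sqrt{p^2+q^2+r^2}$, $\bar p=p/l$, $\bar q=q/l$, $\bar p_L=p/l_L$, $\bar q_L=q/l_L$, $\bar r_L=r/l_L$; non-characteristic means $l\ne0$. There $v_L=\bar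 p_LX_1+\bar q_LX_2+\bar r_L\widetilde X_3$ is the unit normal, $e_1=\bar qX_1-\bar pX_2$, $e_2=\bar r_L\bar pX_1+\bar r_L\bar qX_2-\frac l{l_L}\widetilde X_3$ an orthonormal tangent frame, and $\mathcal H_L=\langle\nabla^L_{e_1}v_L,e_1\rangle_L+\langle\nabla^L_{e_2}v_L,e_2\rangle_L$. *)

From Stdlib Require Import Reals.
From Coquelicot Require Import Coquelicot.
Open Scope R_scope.

Definition pt := (R * R * R)%type.
Definition comp (x : pt) (i : nat) : R :=
  match i with 0%nat => fst (fst x) | 1%nat => snd (fst x) | _ => snd x end.
Definition vec := nat -> R.
Definition sum3 (F : nat -> R) : R := F 0%nat + F 1%nat + F 2%nat.

Definition shift (x : pt) (t : R) (v : vec) : pt :=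
  (comp x 0 + t * v 0%nat, comp x 1 + t * v 1%nat, comp x 2 + t * v 2%nat).
Definition ev (i : nat) : vec := fun k => if Nat.eqb k i then 1 else 0.

Definition dir_deriv (f : pt -> R) (x : pt) (v : vec) : R :=
  Derive (fun t => f (shift x t v)) 0.
Definition has_partial (i : nat) (f : pt -> R) (x : pt) : Prop :=
  ex_derive (fun t => f (shift x t (ev i))) 0.
Definition partial (i : nat) (f : pt -> R) : pt -> R :=
  fun x => dir_deriv f x (ev i).

Definition C2 (f : pt -> R) : Prop :=
  (forall x, continuous f x) /\
  forall i, (i < 3)%nat ->
    (forall x, has_partial i f x) /\ (forall x, continuous (partial i f) x) /\
    forall j, (j < 3)%nat ->
      (forall x, has_partial j (partial i f) x) /\
      (forall x, continuous (partial j (partial i f)) x).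

(** Regular surface Sigma_1 = {u = 0}: u Euclidean C^2, Sigma_1 compact
    (closed by continuity, and bounded), nonvanishing Euclidean gradient on Sigma_1. *)
Definition regular_surface (u : pt -> R) : Prop :=
  C2 u /\
  (exists M, forall x, u x = 0 -> forall i, (i < 3)%nat -> Rabs (comp x i) <= M) /\
  (forall x, u x = 0 -> exists i, (i < 3)%nat /\ partial i u x <> 0).

Definition vfield := pt -> vec.
Definition X1 : vfield := fun _ => ev 2.
Definition X2 : vfield := fun x k =>
  match k with 0%nat => - exp (comp x 2) / sqrt 2
             | 1%nat => exp (- comp x 2) / sqrt 2 | _ => 0 end.
Definition X3 : vfield := fun x k =>
  match k with 0%nat => - exp (comp x 2) / sqrt 2
             | 1%nat => - exp (- comp x 2) / sqrt 2 | _ => 0 end.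
Definition X3t (L : R) : vfield := fun x k => / sqrt L * X3 x k.

Definition vf_apply (A : vfield) (f : pt -> R) : pt -> R :=
  fun x => dir_deriv f x (A x).

(** Dual one-forms (as covectors in dx1,dx2,dx3). *)
Definition om1 : pt -> vec := fun _ => ev 2.
Definition om2 : pt -> vec := fun x k =>
  match k with 0%nat => - exp (- comp x 2) / sqrt 2
             | 1%nat => exp (comp x 2) / sqrt 2 | _ => 0 end.
Definition om : pt -> vec := fun x k =>
  match k with 0%nat => - exp (- comp x 2) / sqrt 2
             | 1%nat => - exp (comp x 2) / sqrt 2 | _ => 0 end.

Definition gL (L : R) (x : pt) (i j : nat) : R :=
  om1 x i * om1 x j + om2 x i * om2 x j + L * (om x i * om x j).
Definition innerL (L : R) (x : pt) (a b : vec) : R :=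
  sum3 (fun i => sum3 (fun j => gL L x i j * a i * b j)).

Definition m3 (i : nat) : nat := Nat.modulo i 3.
Definition cof (G : nat -> nat -> R) (i j : nat) : R :=
  G (m3 (i+1)) (m3 (j+1)) * G (m3 (i+2)) (m3 (j+2))
  - G (m3 (i+1)) (m3 (j+2)) * G (m3 (i+2)) (m3 (j+1)).
Definition det3 (G : nat -> nat -> R) : R := sum3 (fun j => G 0%nat j * cof G 0%nat j).
Definition inv3 (G : nat -> nat -> R) (i j : nat) : R := cof G j i / det3 G.

Definition christ (L : R) (x : pt) (k i j : nat) : R :=
  / 2 * sum3 (fun l => inv3 (gL L x) k l *
     (partial i (fun y => gL L y j l) x + partial j (fun y => gL L y i l) x
      - partial l (fun y => gL L y i j) x)).

Definition covL (L : R) (A V : vfield) (x : pt) : vec := fun k =>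
  dir_deriv (fun y => V y k) x (A x)
  + sum3 (fun i => sum3 (fun j => christ L x k i j * A x i * V x j)).

Section Quant.
Variable u : pt -> R.
Definition p : pt -> R := vf_apply X1 u.
Definition q : pt -> R := vf_apply X2 u.
Definition r (L : R) : pt -> R := vf_apply (X3t L) u.
Definition l : pt -> R := fun x => sqrt (p x ^ 2 + q x ^ 2).
Definition lL (L : R) : pt -> R := fun x => sqrt (p x ^ 2 + q x ^ 2 + r L x ^ 2).
Definition pbar : pt -> R := fun x => p x / l x.
Definition qbar : pt -> R := fun x => q x / l x.
Definition pbarL (L : R) : pt -> R := fun x => p x / lL L x.
Definition qbarL (L : R) : pt -> R := fun x => q x / lL L x.
Definition rbarL (L : R) : pt -> R := fun x => r L x / lL L x.

Definition vL (L : R) : vfield := fun x k =>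
  pbarL L x * X1 x k + qbarL L x * X2 x k + rbarL L x * X3t L x k.
Definition e1 : vfield := fun x k => qbar x * X1 x k - pbar x * X2 x k.
Definition e2 (L : R) : vfield := fun x k =>
  rbarL L x * pbar x * X1 x k + rbarL L x * qbar x * X2 x k
  - (l x / lL L x) * X3t L x k.

Definition HL (L : R) (x : pt) : R :=
  innerL L x (covL L e1 (vL L) x) (e1 x) + innerL L x (covL L (e2 L) (vL L) x) (e2 L x).
End Quant.

(* Since [v_L] is a unit field, [g_L(∇_{v_L} v_L, v_L) = 0], so [H_L] is the full trace of
   [∇ v_L], i.e. its divergence.  In the frame [X1, X2, X3] the Levi-Civita terms of [g_L]
   have zero trace, so with [e = L^(-1/2)], [s = X3 u] and [l_L = sqrt (p^2 + q^2 + e^2 s^2)]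
   the divergence is [X1 (p / l_L) + X2 (q / l_L) + e^2 X3 (s / l_L)].  This depends
   continuously on [e], and at [e = 0] it is [X1 p̄ + X2 q̄]. *)

From Stdlib Require Import Reals Lra Lia Nsatz.
From Coquelicot Require Import Coquelicot.
Open Scope R_scope.

(** * Directional derivatives on R^3 *)

Definition dot (v w : vec) : R := sum3 (fun i => v i * w i).

Definition has_grad (f : pt -> R) (x : pt) (G : vec) : Prop :=
  forall v, is_derive (fun t => f (shift x t v)) 0 (dot v G).

Lemma shift0 (x : pt) (v : vec) : shift x 0 v = x.
Proof. destruct x as [[a b] c]; unfold shift; simpl; f_equal; [f_equal|]; ring. Qed.

Lemma shift_shift (x : pt) (s t : R) (v : vec) :
  shift (shift x s v) t v = shift x (s + t) v.
Proof. destruct x as [[a b] c]; unfold shift; simpl; f_equal; [f_equal|]; ring. Qed.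

Lemma is_derive_eq (f : R -> R) (t d d' : R) : is_derive f t d -> d = d' -> is_derive f t d'.
Proof. now intros H <-. Qed.

Lemma is_derive_partial_slice (g : pt -> R) (i : nat) (y : pt) (s : R) :
  (forall z, has_partial i g z) ->
  is_derive (fun t => g (shift y t (ev i))) s (partial i g (shift y s (ev i))).
Proof.
  intros Hg.
  apply is_derive_ext with (f := fun t => g (shift (shift y s (ev i)) (t - s) (ev i))).
  { intro t. rewrite shift_shift. f_equal. f_equal. ring. }
  apply is_derive_eq with (d := 1 * partial i g (shift y s (ev i))); [|ring].
  apply (is_derive_comp (fun h => g (shift (shift y s (ev i)) h (ev i))) (fun t => t - s)).
  - replace (s - s) with 0 by ring. apply Derive_correct, Hg.
  - auto_derive; auto; ring.
Qed.

Lemma partial_MVT (g : pt -> R) (i : nat) (y : pt) (h : R) :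
  (forall z, has_partial i g z) ->
  exists c, Rabs c <= Rabs h /\
    g (shift y h (ev i)) - g y = partial i g (shift y c (ev i)) * h.
Proof.
  intros Hg.
  destruct (MVT_gen (fun t => g (shift y t (ev i))) 0 h
     (fun t => partial i g (shift y t (ev i)))) as [c [Hc Heq]].
  - intros t _. now apply is_derive_partial_slice.
  - intros t _. apply continuity_pt_filterlim.
    apply (ex_derive_continuous (fun t => g (shift y t (ev i)))).
    eexists. now apply is_derive_partial_slice.
  - exists c. rewrite shift0 in Heq. split.
    + unfold Rmin, Rmax in Hc. destruct (Rle_dec 0 h);
      unfold Rabs; destruct (Rcase_abs c); destruct (Rcase_abs h); lra.
    + rewrite Heq. ring.
Qed.

Definition norm1 (v : vec) : R := Rabs (v 0%nat) + Rabs (v 1%nat) + Rabs (v 2%nat).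

Lemma norm1_ge (v : vec) (j : nat) : (j < 3)%nat -> Rabs (v j) <= norm1 v.
Proof.
  unfold norm1; intros Hj.
  pose proof (Rabs_pos (v 0%nat)); pose proof (Rabs_pos (v 1%nat)); pose proof (Rabs_pos (v 2%nat)).
  destruct j as [|[|[|j]]]; lra || lia.
Qed.

Lemma norm1_nonneg (v : vec) : 0 <= norm1 v.
Proof. eapply Rle_trans; [apply Rabs_pos | apply (norm1_ge v 0); lia]. Qed.

Lemma Rabs_dot_le (v w : vec) (eps : R) :
  (forall i, (i < 3)%nat -> Rabs (w i) < eps) -> Rabs (dot v w) <= norm1 v * eps.
Proof.
  intros Hw. unfold dot, sum3, norm1.
  pose proof (Hw 0%nat ltac:(lia)); pose proof (Hw 1%nat ltac:(lia)); pose proof (Hw 2%nat ltac:(lia)).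
  eapply Rle_trans; [apply Rabs_triang|].
  eapply Rle_trans; [apply Rplus_le_compat_r, Rabs_triang|].
  rewrite !Rabs_mult, !Rmult_plus_distr_r.
  repeat apply Rplus_le_compat; apply Rmult_le_compat_l; try apply Rabs_pos; lra.
Qed.

(* Walk from [x] to [x + h v] along the three coordinate axes, last coordinate first. *)
Lemma increment_by_partials (g : pt -> R) (x : pt) (v : vec) (h : R) :
  (forall i, (i < 3)%nat -> forall z, has_partial i g z) ->
  exists P : nat -> pt,
    (forall i j, (j < 3)%nat -> Rabs (comp (P i) j - comp x j) <= Rabs h * norm1 v) /\
    g (shift x h v) - g x = h * sum3 (fun i => v i * partial i g (P i)).
Proof.
  intros Hg. destruct x as [[x0 x1] x2].
  set (A := (x0, x1 + h * v 1%nat, x2 + h * v 2%nat) : pt).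
  set (B := (x0, x1, x2 + h * v 2%nat) : pt).
  destruct (partial_MVT g 0 A (h * v 0%nat) (Hg 0%nat ltac:(lia))) as [c0 [Hc0 E0]].
  destruct (partial_MVT g 1 B (h * v 1%nat) (Hg 1%nat ltac:(lia))) as [c1 [Hc1 E1]].
  destruct (partial_MVT g 2 (x0, x1, x2) (h * v 2%nat) (Hg 2%nat ltac:(lia))) as [c2 [Hc2 E2]].
  exists (fun i => match i with
                   | 0%nat => shift A c0 (ev 0) | 1%nat => shift B c1 (ev 1)
                   | _ => shift (x0, x1, x2) c2 (ev 2) end).
  split.
  - assert (Hb : forall k, (k < 3)%nat -> Rabs (h * v k) <= Rabs h * norm1 v).
    { intros k Hk. rewrite Rabs_mult.
      apply Rmult_le_compat_l; [apply Rabs_pos | now apply norm1_ge]. }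
    pose proof (Hb 0%nat ltac:(lia)); pose proof (Hb 1%nat ltac:(lia));
    pose proof (Hb 2%nat ltac:(lia)).
    assert (0 <= Rabs h * norm1 v) by (apply Rmult_le_pos; [apply Rabs_pos | apply norm1_nonneg]).
    intros i j Hj.
    destruct i as [|[|i]]; destruct j as [|[|[|j]]]; try lia;
      unfold A, B, shift, ev; simpl;
      match goal with |- Rabs ?d <= _ => ring_simplify d end;
      rewrite ?Rabs_R0; lra.
  - replace (shift (x0, x1, x2) h v) with (shift A (h * v 0%nat) (ev 0))
      by (unfold A, shift, ev; simpl; f_equal; [f_equal|]; ring).
    replace (g (shift A (h * v 0%nat) (ev 0)) - g (x0, x1, x2)) with
      ((g (shift A (h * v 0%nat) (ev 0)) - g A) + (g (shift B (h * v 1%nat) (ev 1)) - g B)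
       + (g (shift (x0, x1, x2) (h * v 2%nat) (ev 2)) - g (x0, x1, x2))).
    + rewrite E0, E1, E2. unfold sum3. ring.
    + replace (shift B (h * v 1%nat) (ev 1)) with A
        by (unfold A, B, shift, ev; simpl; f_equal; [f_equal|]; ring).
      replace (shift (x0, x1, x2) (h * v 2%nat) (ev 2)) with B
        by (unfold B, shift, ev; simpl; f_equal; [f_equal|]; ring).
      ring.
Qed.

Lemma continuous_coordwise (f : pt -> R) (x : pt) (eps : R) :
  continuous f x -> 0 < eps ->
  exists d, 0 < d /\ forall y, (forall j, (j < 3)%nat -> Rabs (comp y j - comp x j) < d) ->
    Rabs (f y - f x) < eps.
Proof.
  intros Hc He.
  destruct (proj1 (filterlim_locally f (f x)) Hc (mkposreal eps He)) as [d Hd].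
  exists d. split; [apply cond_pos|].
  intros y Hy. apply (Hd y).
  destruct x as [[a b] c]; destruct y as [[a' b'] c'].
  split; [split|]; [apply (Hy 0%nat) | apply (Hy 1%nat) | apply (Hy 2%nat)]; lia.
Qed.

Lemma continuous_partials_uniform (g : pt -> R) (x : pt) (eps : R) :
  (forall i, (i < 3)%nat -> continuous (partial i g) x) -> 0 < eps ->
  exists d, 0 < d /\ forall P : nat -> pt,
    (forall i j, (j < 3)%nat -> Rabs (comp (P i) j - comp x j) < d) ->
    forall i, (i < 3)%nat -> Rabs (partial i g (P i) - partial i g x) < eps.
Proof.
  intros Hc He.
  destruct (continuous_coordwise _ x _ (Hc 0%nat ltac:(lia)) He) as [d0 [Hd0 C0]].
  destruct (continuous_coordwise _ x _ (Hc 1%nat ltac:(lia)) He) as [d1 [Hd1 C1]].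
  destruct (continuous_coordwise _ x _ (Hc 2%nat ltac:(lia)) He) as [d2 [Hd2 C2]].
  exists (Rmin d0 (Rmin d1 d2)). split; [repeat apply Rmin_pos; assumption|].
  pose proof (Rmin_l d0 (Rmin d1 d2)); pose proof (Rmin_r d0 (Rmin d1 d2));
  pose proof (Rmin_l d1 d2); pose proof (Rmin_r d1 d2).
  intros P HP [|[|[|i]]] Hi; try lia; [apply C0 | apply C1 | apply C2];
    intros j Hj; (eapply Rlt_le_trans; [apply HP; exact Hj | lra]).
Qed.

Lemma has_grad_of_partials (g : pt -> R) (x : pt) :
  (forall i, (i < 3)%nat -> forall z, has_partial i g z) ->
  (forall i, (i < 3)%nat -> continuous (partial i g) x) ->
  has_grad g x (fun i => partial i g x).
Proof.
  intros Hp Hc v. apply is_derive_Reals. intros eps Heps.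
  set (M := norm1 v + 1).
  assert (HM : 0 < M) by (pose proof (norm1_nonneg v); unfold M; lra).
  destruct (continuous_partials_uniform g x (eps / M) Hc) as [d [Hd Hclose]].
  { apply Rdiv_lt_0_compat; lra. }
  assert (HdM : 0 < d / M) by (apply Rdiv_lt_0_compat; lra).
  exists (mkposreal _ HdM). simpl. intros h Hh0 Hh.
  rewrite shift0, Rplus_0_l.
  destruct (increment_by_partials g x v h Hp) as [P [HP Hinc]].
  assert (Hnear : forall i j, (j < 3)%nat -> Rabs (comp (P i) j - comp x j) < d).
  { intros i j Hj. eapply Rle_lt_trans; [now apply HP|].
    assert (Rabs h * M < d).
    { apply Rmult_lt_reg_r with (/ M); [now apply Rinv_0_lt_compat|].
      replace (Rabs h * M * / M) with (Rabs h) by (field; lra). exact Hh. }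
    pose proof (Rabs_pos h). unfold M in *. nra. }
  rewrite Hinc.
  replace (h * sum3 (fun i => v i * partial i g (P i)) / h - dot v (fun i => partial i g x))
    with (dot v (fun i => partial i g (P i) - partial i g x))
    by (unfold dot, sum3; field; exact Hh0).
  eapply Rle_lt_trans; [apply Rabs_dot_le, (Hclose P Hnear)|].
  replace eps with (M * (eps / M)) at 2 by (field; lra).
  apply Rmult_lt_compat_r; [apply Rdiv_lt_0_compat | unfold M]; lra.
Qed.

Lemma has_grad_ext (f g : pt -> R) (x : pt) (G : vec) :
  (forall y, f y = g y) -> has_grad g x G -> has_grad f x G.
Proof. intros Hfg Hg v. apply is_derive_ext with (f := fun t => g (shift x t v)); auto. Qed.

Lemma has_grad_grad_ext (f : pt -> R) (x : pt) (G G' : vec) :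
  has_grad f x G -> (forall k, G k = G' k) -> has_grad f x G'.
Proof.
  intros Hf HG v. apply is_derive_eq with (dot v G); auto.
  unfold dot, sum3. now rewrite !HG.
Qed.

Lemma has_grad_plus (f g : pt -> R) (x : pt) (Gf Gg : vec) :
  has_grad f x Gf -> has_grad g x Gg ->
  has_grad (fun y => f y + g y) x (fun k => Gf k + Gg k).
Proof.
  intros Hf Hg v. eapply is_derive_eq; [apply (is_derive_plus _ _ _ _ _ (Hf v) (Hg v))|].
  change (dot v Gf + dot v Gg = dot v (fun k => Gf k + Gg k)).
  unfold dot, sum3. ring.
Qed.

Lemma has_grad_mult (f g : pt -> R) (x : pt) (Gf Gg : vec) :
  has_grad f x Gf -> has_grad g x Gg ->
  has_grad (fun y => f y * g y) x (fun k => Gf k * g x + f x * Gg k).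
Proof.
  intros Hf Hg v.
  eapply is_derive_eq; [apply (is_derive_mult _ _ _ _ _ (Hf v) (Hg v)), Rmult_comm|].
  rewrite shift0.
  change (dot v Gf * g x + f x * dot v Gg = dot v (fun k => Gf k * g x + f x * Gg k)).
  unfold dot, sum3. ring.
Qed.

Lemma has_grad_scal (c : R) (f : pt -> R) (x : pt) (G : vec) :
  has_grad f x G -> has_grad (fun y => c * f y) x (fun k => c * G k).
Proof.
  intros Hf v. eapply is_derive_eq; [apply (is_derive_scal _ _ c _ (Hf v))|].
  unfold dot, sum3. ring.
Qed.

Lemma has_grad_sqr (f : pt -> R) (x : pt) (G : vec) :
  has_grad f x G -> has_grad (fun y => f y ^ 2) x (fun k => 2 * f x * G k).
Proof.
  intros Hf v. eapply is_derive_eq; [apply (is_derive_pow _ 2 _ _ (Hf v))|].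
  rewrite shift0. unfold dot, sum3; simpl. ring.
Qed.

Lemma has_grad_div (f g : pt -> R) (x : pt) (Gf Gg : vec) :
  has_grad f x Gf -> has_grad g x Gg -> g x <> 0 ->
  has_grad (fun y => f y / g y) x (fun k => (Gf k * g x - f x * Gg k) / g x ^ 2).
Proof.
  intros Hf Hg Hgx v.
  eapply is_derive_eq; [apply (is_derive_div _ _ _ _ _ (Hf v) (Hg v)); now rewrite shift0|].
  rewrite shift0. unfold dot, sum3. field. exact Hgx.
Qed.

Lemma has_grad_sqrt (f : pt -> R) (x : pt) (G : vec) :
  has_grad f x G -> 0 < f x ->
  has_grad (fun y => sqrt (f y)) x (fun k => G k / (2 * sqrt (f x))).
Proof.
  intros Hf Hfx v.
  eapply is_derive_eq.
  - apply (is_derive_comp sqrt (fun t => f (shift x t v))); [|apply Hf].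
    apply is_derive_Reals, derivable_pt_lim_sqrt. now rewrite shift0.
  - rewrite shift0. change (dot v G * / (2 * sqrt (f x)) = dot v (fun k => G k / (2 * sqrt (f x)))).
    pose proof (sqrt_lt_R0 _ Hfx). unfold dot, sum3. field. lra.
Qed.

Lemma has_grad_of_comp2 (F : R -> R) (x : pt) (dF : R) :
  is_derive F (comp x 2) dF -> has_grad (fun y => F (comp y 2)) x (fun k => dF * ev 2 k).
Proof.
  intros HF v. eapply is_derive_eq.
  - apply (is_derive_comp F (fun t => comp x 2 + t * v 2%nat)).
    + replace (comp x 2 + 0 * v 2%nat) with (comp x 2) by ring. exact HF.
    + auto_derive; auto.
  - change (1 * v 2%nat * dF = dot v (fun k => dF * ev 2 k)).
    unfold dot, sum3, ev; simpl. ring.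
Qed.

Lemma dir_deriv_of_has_grad (f : pt -> R) (x : pt) (G v : vec) :
  has_grad f x G -> dir_deriv f x v = dot v G.
Proof. intros Hf. apply is_derive_unique, Hf. Qed.

Lemma C2_has_grad (u : pt -> R) (y : pt) :
  C2 u -> has_grad u y (fun i => partial i u y).
Proof.
  intros [_ Hu]. apply has_grad_of_partials; intros i Hi.
  - exact (proj1 (Hu i Hi)).
  - exact (proj1 (proj2 (Hu i Hi)) y).
Qed.

Lemma C2_partial_has_grad (u : pt -> R) (i : nat) (y : pt) :
  C2 u -> (i < 3)%nat -> has_grad (partial i u) y (fun j => partial j (partial i u) y).
Proof.
  intros [_ Hu] Hi. apply has_grad_of_partials; intros j Hj.
  - exact (proj1 (proj2 (proj2 (Hu i Hi)) j Hj)).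
  - exact (proj2 (proj2 (proj2 (Hu i Hi)) j Hj) y).
Qed.

Lemma vf_apply_partials (A : vfield) (u : pt -> R) (y : pt) :
  C2 u -> vf_apply A u y = sum3 (fun i => A y i * partial i u y).
Proof. intros Hu. apply dir_deriv_of_has_grad, C2_has_grad, Hu. Qed.

Lemma vf_apply_has_grad (A : vfield) (u : pt -> R) (x : pt) :
  C2 u -> (forall i, (i < 3)%nat -> exists G, has_grad (fun y => A y i) x G) ->
  exists G, has_grad (vf_apply A u) x G.
Proof.
  intros Hu HA.
  destruct (HA 0%nat ltac:(lia)) as [G0 H0].
  destruct (HA 1%nat ltac:(lia)) as [G1 H1].
  destruct (HA 2%nat ltac:(lia)) as [G2 H2].
  eexists. apply has_grad_ext with (g := fun y => sum3 (fun i => A y i * partial i u y)).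
  { intro y. now apply vf_apply_partials. }
  unfold sum3.
  apply has_grad_plus; [apply has_grad_plus|];
    (apply has_grad_mult; [eassumption | apply C2_partial_has_grad; [exact Hu | lia]]).
Qed.

(** * The frame X1, X2, X3 and the Levi-Civita connection of g_L *)

Lemma sqrt2_neq0 : sqrt 2 <> 0.
Proof. apply Rgt_not_eq, sqrt_lt_R0; lra. Qed.

Lemma exp_opp_div_sqrt2 (z : R) : exp (- z) / sqrt 2 = / (2 * (exp z / sqrt 2)).
Proof.
  pose proof sqrt2_neq0. pose proof (exp_pos z). rewrite exp_Ropp.
  replace 2 with (sqrt 2 * sqrt 2) at 2 by (apply sqrt_sqrt; lra).
  field. split; lra.
Qed.

Lemma neg_div (a b : R) : - a / b = - (a / b).
Proof. unfold Rdiv; ring. Qed.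

(* Everything is rewritten in terms of the single positive atom [exp z / sqrt 2],
   since [exp (- z) / sqrt 2] is its inverse up to the factor 2. *)
Ltac abstract_exp z a :=
  rewrite ?neg_div, ?(exp_opp_div_sqrt2 z);
  set (a := exp z / sqrt 2) in *;
  assert (0 < a) by (unfold a; apply Rdiv_lt_0_compat; [apply exp_pos | apply sqrt_lt_R0; lra]);
  clearbody a.

Lemma X1_has_grad (x : pt) (k : nat) : has_grad (fun y => X1 y k) x (fun _ => 0).
Proof.
  intro v. apply is_derive_eq with 0; [|unfold dot, sum3; ring].
  apply (is_derive_const (K := R_AbsRing) (V := R_NormedModule) (ev 2%nat k)).
Qed.

Lemma X2_has_grad (x : pt) (k : nat) : has_grad (fun y => X2 y k) x (fun i => X3 x k * ev 2 i).
Proof.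
  apply (has_grad_of_comp2 (fun w => X2 (0, 0, w) k)).
  pose proof sqrt2_neq0. destruct k as [|[|k]]; simpl; auto_derive; auto; field; auto.
Qed.

Lemma X3_has_grad (x : pt) (k : nat) : has_grad (fun y => X3 y k) x (fun i => X2 x k * ev 2 i).
Proof.
  apply (has_grad_of_comp2 (fun w => X3 (0, 0, w) k)).
  pose proof sqrt2_neq0. destruct k as [|[|k]]; simpl; auto_derive; auto; field; auto.
Qed.

Definition Xf (j : nat) : vfield :=
  match j with 0%nat => X1 | 1%nat => X2 | _ => X3 end.

Lemma Xf_component_has_grad (j i : nat) (x : pt) :
  exists G, has_grad (fun y => Xf j y i) x G.
Proof.
  destruct j as [|[|j]]; eexists;
    [apply X1_has_grad | apply X2_has_grad | apply X3_has_grad].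
Qed.

Lemma frame_vf_apply_has_grad (j : nat) (u : pt -> R) (x : pt) :
  C2 u -> exists G, has_grad (vf_apply (Xf j) u) x G.
Proof. intros Hu. apply vf_apply_has_grad; auto. intros i _. apply Xf_component_has_grad. Qed.

Lemma partial_gL (L : R) (x : pt) (i j k : nat) :
  partial i (fun y => gL L y j k) x
  = - (1 + L) * (om x j * om2 x k + om2 x j * om x k) * ev i 2%nat.
Proof.
  assert (HF : is_derive (fun w => gL L (0, 0, w) j k) (comp x 2)
                 (- (1 + L) * (om x j * om2 x k + om2 x j * om x k))).
  { pose proof sqrt2_neq0.
    unfold gL, om1, om2, om, ev.
    destruct j as [|[|j]]; destruct k as [|[|k]]; simpl; auto_derive; auto; field; auto. }
  unfold partial. rewrite (dir_deriv_of_has_grad _ _ _ _ (has_grad_of_comp2 _ _ _ HF)).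
  unfold dot, sum3, ev. destruct i as [|[|[|i]]]; simpl; ring.
Qed.

(* Christoffel symbols [Γ^k_ij] of [g_L] in the coordinates [x_i], where
   [a = exp x3 / sqrt 2] and [b = exp (- x3) / sqrt 2]. *)
Definition christoffel (L a b : R) (k i j : nat) : R :=
  match k, i, j with
  | 2%nat, 0%nat, 0%nat => (1 + L) * b ^ 2
  | 2%nat, 1%nat, 1%nat => - (1 + L) * a ^ 2
  | 0%nat, 2%nat, 0%nat | 0%nat, 0%nat, 2%nat => - (1 + L) ^ 2 / (4 * L)
  | 1%nat, 2%nat, 0%nat | 1%nat, 0%nat, 2%nat => (L * L - 1) * b ^ 2 / (2 * L)
  | 0%nat, 2%nat, 1%nat | 0%nat, 1%nat, 2%nat => - (L * L - 1) * a ^ 2 / (2 * L)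
  | 1%nat, 2%nat, 1%nat | 1%nat, 1%nat, 2%nat => (1 + L) ^ 2 / (4 * L)
  | _, _, _ => 0
  end.

Lemma christ_eq (L : R) (x : pt) (k i j : nat) :
  0 < L -> (k < 3)%nat -> (i < 3)%nat -> (j < 3)%nat ->
  christ L x k i j
  = christoffel L (exp (comp x 2) / sqrt 2) (exp (- comp x 2) / sqrt 2) k i j.
Proof.
  intros HL Hk Hi Hj. pose proof sqrt2_neq0.
  unfold christ, sum3. cbv beta. rewrite !partial_gL.
  unfold inv3, det3, cof, sum3, gL, om1, om2, om, m3, ev.
  set (z := comp x 2). clearbody z. abstract_exp z a.
  destruct k as [|[|[|k]]]; try lia; destruct i as [|[|[|i]]]; try lia;
    destruct j as [|[|[|j]]]; try lia; simpl.
  all: field; repeat split; try lra;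
    match goal with |- ?E <> 0 => replace E with (4 * L * (a * a)) by ring end;
    assert (0 < 4 * L * (a * a)) by (apply Rmult_lt_0_compat; nra); lra.
Qed.

Definition frame_vec (c : vec) (y : pt) : vec := fun k =>
  c 0%nat * X1 y k + c 1%nat * X2 y k + c 2%nat * X3 y k.

Lemma dot_frame_vec (x : pt) (a w G : vec) :
  (forall k, w k = frame_vec a x k) -> dot w G = sum3 (fun j => a j * dot (Xf j x) G).
Proof. intros Hw. unfold dot, sum3. rewrite !Hw. unfold frame_vec; simpl. ring. Qed.

Lemma dot_scal (w G : vec) (c : R) : dot w (fun k => c * G k) = c * dot w G.
Proof. unfold dot, sum3. ring. Qed.

Lemma dir_deriv_frame_vec (V : vfield) (c : pt -> vec) (d : vec) (x : pt) (w : vec) (k : nat) :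
  (forall y k, V y k = frame_vec (c y) y k) ->
  (forall i, (i < 3)%nat -> is_derive (fun t => c (shift x t w) i) 0 (d i)) ->
  dir_deriv (fun y => V y k) x w
  = frame_vec d x k + w 2%nat * (c x 1%nat * X3 x k + c x 2%nat * X2 x k).
Proof.
  intros HV Hd. unfold dir_deriv. apply is_derive_unique.
  apply is_derive_ext with (f := fun t => frame_vec (c (shift x t w)) (shift x t w) k).
  { intro t. symmetry. apply HV. }
  unfold frame_vec. eapply is_derive_eq.
  - apply (is_derive_plus (K := R_AbsRing) (V := R_NormedModule));
      [apply (is_derive_plus (K := R_AbsRing) (V := R_NormedModule))|];
      (apply (is_derive_mult (K := R_AbsRing)); [apply Hd; lia | | exact Rmult_comm]).
    + apply X1_has_grad.
    + apply X2_has_grad.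
    + apply X3_has_grad.
  - change (d 0%nat * X1 (shift x 0 w) k + c (shift x 0 w) 0%nat * dot w (fun _ => 0)
            + (d 1%nat * X2 (shift x 0 w) k + c (shift x 0 w) 1%nat * dot w (fun i => X3 x k * ev 2 i))
            + (d 2%nat * X3 (shift x 0 w) k + c (shift x 0 w) 2%nat * dot w (fun i => X2 x k * ev 2 i))
            = frame_vec d x k + w 2%nat * (c x 1%nat * X3 x k + c x 2%nat * X2 x k)).
    rewrite shift0. unfold frame_vec, dot, sum3, ev; simpl. ring.
Qed.

(* [g_L(∇_A V, B)] for [V = Σ c_i X_i], [A = Σ a_i X_i], [B = Σ b_i X_i], where
   [d_i = A(c_i)]; the last two lines are the Levi-Civita terms [g_L(∇_{X_i} X_j, X_k)]. *)
Definition conn_form (L : R) (c d a b : vec) : R :=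
  d 0%nat * b 0%nat + d 1%nat * b 1%nat + L * d 2%nat * b 2%nat
  + (L - 1) / 2 * (a 0%nat * c 1%nat * b 2%nat - a 0%nat * c 2%nat * b 1%nat)
  + (L + 1) / 2 * (- a 1%nat * c 0%nat * b 2%nat + a 1%nat * c 2%nat * b 0%nat
                   - a 2%nat * c 0%nat * b 1%nat + a 2%nat * c 1%nat * b 0%nat).

Lemma innerL_covL_frame (L : R) (x : pt) (A V : vfield) (c : pt -> vec) (a b B d : vec) :
  0 < L ->
  (forall y k, V y k = frame_vec (c y) y k) ->
  (forall k, A x k = frame_vec a x k) ->
  (forall k, B k = frame_vec b x k) ->
  (forall i, (i < 3)%nat -> is_derive (fun t => c (shift x t (A x)) i) 0 (d i)) ->
  innerL L x (covL L A V x) B = conn_form L (c x) d a b.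
Proof.
  intros HL HV HA HB Hd.
  unfold innerL, covL, sum3. cbv beta.
  rewrite !(dir_deriv_frame_vec V c d x (A x) _ HV Hd).
  rewrite !christ_eq by (auto; lia).
  rewrite !HA, !HB, !HV.
  unfold christoffel, conn_form, frame_vec, gL, om1, om2, om, X1, X2, X3, ev.
  set (z := comp x 2). clearbody z. simpl.
  pose proof sqrt2_neq0. abstract_exp z alpha.
  field. lra.
Qed.

(** * Traces of the connection form *)

Definition vec3 (a0 a1 a2 : R) : vec := fun k =>
  match k with 0%nat => a0 | 1%nat => a1 | _ => a2 end.

Definition frame_gram_inv (L : R) (i j : nat) : R :=
  if Nat.eqb i j then (if Nat.eqb i 2 then / L else 1) else 0.

Definition frame_deriv (D : nat -> nat -> R) (a : vec) : vec :=
  fun i => sum3 (fun j => a j * D i j).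

(* Read [D i j] as [X_j(c_i)].  The hypotheses say that [|V|_L] is constant to first order,
   so [g_L(∇_V V, V) = 0], and that [(E1, E2, c)] is [g_L]-orthonormal; the left side is then
   the trace of [∇V], which is computed in the orthonormal basis [X1, X2, X3 / sqrt L]. *)
Lemma conn_form_trace (L : R) (c : vec) (D : nat -> nat -> R) (E1 E2 : vec) :
  L <> 0 ->
  (forall j, (j < 3)%nat -> c 0%nat * D 0%nat j + c 1%nat * D 1%nat j + L * c 2%nat * D 2%nat j = 0) ->
  (forall i j, (i < 3)%nat -> (j < 3)%nat ->
     E1 i * E1 j + E2 i * E2 j + c i * c j = frame_gram_inv L i j) ->
  conn_form L c (frame_deriv D E1) E1 E1 + conn_form L c (frame_deriv D E2) E2 E2
  = D 0%nat 0%nat + D 1%nat 1%nat + D 2%nat 2%nat.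
Proof.
  intros HL Hunit Hcomp.
  assert (Hcc : conn_form L c (frame_deriv D c) c c = 0).
  { transitivity (sum3 (fun j => c j * (c 0%nat * D 0%nat j + c 1%nat * D 1%nat j
                                        + L * c 2%nat * D 2%nat j))).
    - unfold conn_form, frame_deriv, sum3. field.
    - unfold sum3. rewrite !Hunit by lia. ring. }
  set (K i j := conn_form L c (frame_deriv D (ev i)) (ev i) (ev j)).
  transitivity (sum3 (fun i => sum3 (fun j => (E1 i * E1 j + E2 i * E2 j + c i * c j) * K i j))
                - conn_form L c (frame_deriv D c) c c).
  - unfold K, conn_form, frame_deriv, sum3, ev. simpl. field.
  - rewrite Hcc. unfold sum3. rewrite !Hcomp by lia.
    unfold K, frame_gram_inv, conn_form, frame_deriv, sum3, ev. simpl. field. exact HL.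
Qed.

Lemma orthonormal_frame_completeness (L e P Q rho mu : R) :
  L * e ^ 2 = 1 -> P ^ 2 + Q ^ 2 = 1 -> rho ^ 2 + mu ^ 2 = 1 ->
  forall i j, (i < 3)%nat -> (j < 3)%nat ->
    vec3 Q (- P) 0 i * vec3 Q (- P) 0 j
    + vec3 (rho * P) (rho * Q) (- mu * e) i * vec3 (rho * P) (rho * Q) (- mu * e) j
    + vec3 (mu * P) (mu * Q) (rho * e) i * vec3 (mu * P) (mu * Q) (rho * e) j
    = frame_gram_inv L i j.
Proof.
  intros HLe HPQ Hrm i j Hi Hj.
  assert (HinvL : / L = e ^ 2).
  { assert (L <> 0) by (intros ->; lra). field_simplify_eq; [lra | assumption]. }
  unfold frame_gram_inv. rewrite HinvL. clear HLe HinvL. simpl in *.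
  destruct i as [|[|[|i]]]; destruct j as [|[|[|j]]]; try lia; clear Hi Hj; simpl; nsatz.
Qed.

Lemma unit_normal_orthogonal_deriv (L e p q s m dp dq ds : R) :
  L * e ^ 2 = 1 -> m ^ 2 = p ^ 2 + q ^ 2 + (e * s) ^ 2 -> m <> 0 ->
  p / m * ((dp * m - p * ((p * dp + q * dq + e ^ 2 * s * ds) / m)) / m ^ 2)
  + q / m * ((dq * m - q * ((p * dp + q * dq + e ^ 2 * s * ds) / m)) / m ^ 2)
  + L * (e * s / m * e) * (e ^ 2 * ((ds * m - s * ((p * dp + q * dq + e ^ 2 * s * ds) / m)) / m ^ 2))
  = 0.
Proof.
  intros HLe Hm Hm0.
  field_simplify_eq; [|exact Hm0].
  simpl in *. nsatz.
Qed.

(** * The mean curvature as a divergence *)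

Definition s (u : pt -> R) : pt -> R := vf_apply X3 u.

Definition lam (u : pt -> R) (e : R) (y : pt) : R :=
  sqrt (p u y ^ 2 + q u y ^ 2 + (e * s u y) ^ 2).

Lemma r_eq_s (u : pt -> R) (L : R) (y : pt) : C2 u -> r u L y = / sqrt L * s u y.
Proof. intros Hu. unfold r, s. rewrite !vf_apply_partials by exact Hu. unfold sum3, X3t. ring. Qed.

Lemma lL_eq_lam (u : pt -> R) (L : R) (y : pt) : C2 u -> lL u L y = lam u (/ sqrt L) y.
Proof. intros Hu. unfold lL, lam. now rewrite r_eq_s. Qed.

Lemma l_eq_lam (u : pt -> R) (y : pt) : l u y = lam u 0 y.
Proof. unfold l, lam. f_equal. ring. Qed.

Section NonCharacteristicPoint.

Variables (u : pt -> R) (x : pt) (Gp Gq Gs : vec).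
Hypothesis Hu : C2 u.
Hypothesis Hnc : l u x <> 0.
Hypothesis Hp : has_grad (p u) x Gp.
Hypothesis Hq : has_grad (q u) x Gq.
Hypothesis Hs : has_grad (s u) x Gs.

Definition grad_lam (e : R) : vec := fun k =>
  (p u x * Gp k + q u x * Gq k + e ^ 2 * s u x * Gs k) / lam u e x.

Definition grad_over_lam (f : R) (Gf : vec) (e : R) : vec := fun k =>
  (Gf k * lam u e x - f * grad_lam e k) / lam u e x ^ 2.

(* The divergence [X1 p̄_L + X2 q̄_L + X3 (r̄_L / sqrt L)] of [v_L], for [e = L^(-1/2)]. *)
Definition div_normal (e : R) : R :=
  dot (X1 x) (grad_over_lam (p u x) Gp e) + dot (X2 x) (grad_over_lam (q u x) Gq e)
  + e ^ 2 * dot (X3 x) (grad_over_lam (s u x) Gs e).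

Lemma pq_sqr_pos : 0 < p u x ^ 2 + q u x ^ 2.
Proof.
  destruct (Rle_lt_dec (p u x ^ 2 + q u x ^ 2) 0) as [Hle|]; auto.
  exfalso. apply Hnc. unfold l. now apply sqrt_neg_0.
Qed.

Lemma l_sqr : l u x ^ 2 = p u x ^ 2 + q u x ^ 2.
Proof. unfold l. rewrite <- Rsqr_pow2, Rsqr_sqrt; [reflexivity|]. pose proof pq_sqr_pos. lra. Qed.

Lemma pbar_qbar_unit : pbar u x ^ 2 + qbar u x ^ 2 = 1.
Proof.
  unfold pbar, qbar.
  replace ((p u x / l u x) ^ 2 + (q u x / l u x) ^ 2) with ((p u x ^ 2 + q u x ^ 2) / l u x ^ 2)
    by (field; exact Hnc).
  rewrite <- l_sqr. field. exact Hnc.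
Qed.

Lemma lam_pos (e : R) : 0 < lam u e x.
Proof. apply sqrt_lt_R0. pose proof pq_sqr_pos. pose proof (pow2_ge_0 (e * s u x)). lra. Qed.

Lemma lam_sqr (e : R) : lam u e x ^ 2 = p u x ^ 2 + q u x ^ 2 + (e * s u x) ^ 2.
Proof.
  unfold lam. rewrite <- Rsqr_pow2, Rsqr_sqrt; [reflexivity|].
  pose proof pq_sqr_pos. pose proof (pow2_ge_0 (e * s u x)). lra.
Qed.

Lemma has_grad_lam (e : R) : has_grad (lam u e) x (grad_lam e).
Proof.
  pose proof (lam_pos e) as Hlam.
  eapply has_grad_grad_ext.
  - apply has_grad_sqrt; [|pose proof pq_sqr_pos; pose proof (pow2_ge_0 (e * s u x)); lra].
    apply has_grad_plus; [apply has_grad_plus|]; apply has_grad_sqr;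
      [exact Hp | exact Hq | apply has_grad_scal, Hs].
  - intro k. unfold grad_lam. fold (lam u e x). field. lra.
Qed.

Lemma has_grad_over_lam (f : pt -> R) (Gf : vec) (e : R) :
  has_grad f x Gf -> has_grad (fun y => f y / lam u e y) x (grad_over_lam (f x) Gf e).
Proof.
  intros Hf. apply has_grad_div; [exact Hf | apply has_grad_lam |].
  apply Rgt_not_eq, lam_pos.
Qed.

Lemma dot_grad_over_lam (w Gf : vec) (f e : R) :
  dot w (grad_over_lam f Gf e)
  = (dot w Gf * lam u e x - f * ((p u x * dot w Gp + q u x * dot w Gq
                                   + e ^ 2 * s u x * dot w Gs) / lam u e x)) / lam u e x ^ 2.
Proof.
  pose proof (lam_pos e). unfold dot, grad_over_lam, grad_lam, sum3. field. lra.
Qed.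

Lemma div_normal_continuous : continuous div_normal 0.
Proof.
  pose proof pq_sqr_pos.
  apply (ex_derive_continuous div_normal).
  unfold div_normal, grad_over_lam, grad_lam, lam, dot, sum3.
  auto_derive.
  assert (Hpos : 0 < p u x * (p u x * 1) + q u x * (q u x * 1) + 0 * s u x * (0 * s u x * 1))
    by (simpl in H; lra).
  pose proof (sqrt_lt_R0 _ Hpos).
  repeat split; first [lra | apply Rgt_not_eq; nra].
Qed.

Lemma div_normal_at_0 :
  vf_apply X1 (pbar u) x + vf_apply X2 (qbar u) x = div_normal 0.
Proof.
  assert (Hpbar : has_grad (pbar u) x (grad_over_lam (p u x) Gp 0)).
  { apply has_grad_ext with (g := fun y => p u y / lam u 0 y).
    - intro y. unfold pbar. now rewrite l_eq_lam.
    - now apply has_grad_over_lam. }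
  assert (Hqbar : has_grad (qbar u) x (grad_over_lam (q u x) Gq 0)).
  { apply has_grad_ext with (g := fun y => q u y / lam u 0 y).
    - intro y. unfold qbar. now rewrite l_eq_lam.
    - now apply has_grad_over_lam. }
  unfold vf_apply.
  rewrite (dir_deriv_of_has_grad _ _ _ _ Hpbar), (dir_deriv_of_has_grad _ _ _ _ Hqbar).
  unfold div_normal. ring.
Qed.

Section FixedL.

Variable L : R.
Hypothesis HL0 : 0 < L.

Lemma sqrt_L_pos : 0 < sqrt L.
Proof. apply sqrt_lt_R0, HL0. Qed.

Lemma L_inv_sqrt_sqr : L * (/ sqrt L) ^ 2 = 1.
Proof.
  pose proof sqrt_L_pos. rewrite <- (sqrt_sqrt L) at 1 by lra. field. lra.
Qed.

Definition vL_coeff (y : pt) : vec :=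
  vec3 (pbarL u L y) (qbarL u L y) (rbarL u L y * / sqrt L).

Definition vL_coeff_grad (i : nat) : vec :=
  match i with
  | 0%nat => grad_over_lam (p u x) Gp (/ sqrt L)
  | 1%nat => grad_over_lam (q u x) Gq (/ sqrt L)
  | _ => fun k => (/ sqrt L) ^ 2 * grad_over_lam (s u x) Gs (/ sqrt L) k
  end.

Definition vL_coeff_deriv (i j : nat) : R := dot (Xf j x) (vL_coeff_grad i).

Definition e1_coeff : vec := vec3 (qbar u x) (- pbar u x) 0.

Definition e2_coeff : vec :=
  vec3 (rbarL u L x * pbar u x) (rbarL u L x * qbar u x) (- (l u x / lL u L x) * / sqrt L).

Lemma vL_frame (y : pt) (k : nat) : vL u L y k = frame_vec (vL_coeff y) y k.
Proof. cbv beta iota delta [vL X3t frame_vec vL_coeff vec3]. ring. Qed.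

Lemma e1_frame (k : nat) : e1 u x k = frame_vec e1_coeff x k.
Proof. cbv beta iota delta [e1 frame_vec e1_coeff vec3]. ring. Qed.

Lemma e2_frame (k : nat) : e2 u L x k = frame_vec e2_coeff x k.
Proof. cbv beta iota delta [e2 X3t frame_vec e2_coeff vec3]. ring. Qed.

Lemma vL_coeff_has_grad (i : nat) :
  (i < 3)%nat -> has_grad (fun y => vL_coeff y i) x (vL_coeff_grad i).
Proof.
  destruct i as [|[|[|i]]]; intros Hi; try lia; simpl.
  - apply has_grad_ext with (g := fun y => p u y / lam u (/ sqrt L) y);
      [|now apply has_grad_over_lam].
    intro y. unfold pbarL. now rewrite lL_eq_lam.
  - apply has_grad_ext with (g := fun y => q u y / lam u (/ sqrt L) y);
      [|now apply has_grad_over_lam].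
    intro y. unfold qbarL. now rewrite lL_eq_lam.
  - apply has_grad_ext with (g := fun y => (/ sqrt L) ^ 2 * (s u y / lam u (/ sqrt L) y)).
    + intro y. unfold rbarL. rewrite lL_eq_lam, r_eq_s by exact Hu. unfold Rdiv. ring.
    + apply has_grad_scal. now apply has_grad_over_lam.
Qed.

Lemma vL_coeff_is_derive (a w : vec) :
  (forall k, w k = frame_vec a x k) -> forall i, (i < 3)%nat ->
  is_derive (fun t => vL_coeff (shift x t w) i) 0 (frame_deriv vL_coeff_deriv a i).
Proof.
  intros Hw i Hi. eapply is_derive_eq; [apply (vL_coeff_has_grad i Hi)|].
  now rewrite (dot_frame_vec x a w _ Hw).
Qed.

Lemma vL_unit_deriv (j : nat) :
  vL_coeff x 0%nat * vL_coeff_deriv 0%nat j + vL_coeff x 1%nat * vL_coeff_deriv 1%nat j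
  + L * vL_coeff x 2%nat * vL_coeff_deriv 2%nat j = 0.
Proof.
  cbv beta iota delta [vL_coeff_deriv vL_coeff_grad vL_coeff vec3].
  rewrite dot_scal, !dot_grad_over_lam.
  unfold pbarL, qbarL, rbarL. rewrite lL_eq_lam, r_eq_s by exact Hu.
  apply unit_normal_orthogonal_deriv;
    [apply L_inv_sqrt_sqr | apply lam_sqr | apply Rgt_not_eq, lam_pos].
Qed.

Lemma rbarL_l_unit : rbarL u L x ^ 2 + (l u x / lL u L x) ^ 2 = 1.
Proof.
  pose proof (lam_pos (/ sqrt L)). pose proof sqrt_L_pos.
  unfold rbarL. rewrite lL_eq_lam, r_eq_s by exact Hu.
  replace ((/ sqrt L * s u x / lam u (/ sqrt L) x) ^ 2 + (l u x / lam u (/ sqrt L) x) ^ 2)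
    with (((/ sqrt L * s u x) ^ 2 + l u x ^ 2) / lam u (/ sqrt L) x ^ 2)
    by (field; split; lra).
  replace ((/ sqrt L * s u x) ^ 2 + l u x ^ 2) with (lam u (/ sqrt L) x ^ 2)
    by (rewrite l_sqr, lam_sqr; ring).
  field. lra.
Qed.

Lemma frame_orthonormal (i j : nat) : (i < 3)%nat -> (j < 3)%nat ->
  e1_coeff i * e1_coeff j + e2_coeff i * e2_coeff j + vL_coeff x i * vL_coeff x j
  = frame_gram_inv L i j.
Proof.
  pose proof (lam_pos (/ sqrt L)).
  assert (Hc : forall k, vL_coeff x k = vec3 (l u x / lL u L x * pbar u x)
                 (l u x / lL u L x * qbar u x) (rbarL u L x * / sqrt L) k).
  { intros [|[|k]]; cbv beta iota delta [vL_coeff vec3]; unfold pbarL, qbarL, pbar, qbar;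
      rewrite ?lL_eq_lam by exact Hu; [field; split; lra | field; split; lra | reflexivity]. }
  intros Hi Hj. rewrite (Hc i), (Hc j).
  apply orthonormal_frame_completeness;
    [apply L_inv_sqrt_sqr | apply pbar_qbar_unit | apply rbarL_l_unit | exact Hi | exact Hj].
Qed.

Lemma HL_eq_div_normal : HL u L x = div_normal (/ sqrt L).
Proof.
  unfold HL.
  rewrite (innerL_covL_frame L x (e1 u) (vL u L) vL_coeff e1_coeff e1_coeff (e1 u x)
             (frame_deriv vL_coeff_deriv e1_coeff) HL0 vL_frame e1_frame e1_frame
             (vL_coeff_is_derive _ _ e1_frame)).
  rewrite (innerL_covL_frame L x (e2 u L) (vL u L) vL_coeff e2_coeff e2_coeff (e2 u L x)
             (frame_deriv vL_coeff_deriv e2_coeff) HL0 vL_frame e2_frame e2_frame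
             (vL_coeff_is_derive _ _ e2_frame)).
  rewrite (conn_form_trace L (vL_coeff x) vL_coeff_deriv e1_coeff e2_coeff);
    [| lra | intros j _; apply vL_unit_deriv | apply frame_orthonormal].
  unfold vL_coeff_deriv, vL_coeff_grad, div_normal. simpl. rewrite dot_scal. ring.
Qed.

End FixedL.

End NonCharacteristicPoint.

Lemma is_lim_inv_sqrt : is_lim (fun L => / sqrt L) p_infty 0.
Proof.
  apply (is_lim_inv (fun L => sqrt L) p_infty p_infty); [|discriminate].
  apply (is_lim_sqrt_p (fun L => L)), is_lim_id.
Qed.

Theorem proposition6p4 (u : pt -> R) (Hreg : regular_surface u)
  (x : pt) (Hx : u x = 0) (Hnc : l u x <> 0) :
  is_lim (fun L => HL u L x) p_infty
    (Finite (vf_apply X1 (pbar u) x + vf_apply X2 (qbar u) x)).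
Proof.
  destruct Hreg as [Hu _].
  destruct (frame_vf_apply_has_grad 0 u x Hu) as [Gp Hp].
  destruct (frame_vf_apply_has_grad 1 u x Hu) as [Gq Hq].
  destruct (frame_vf_apply_has_grad 2 u x Hu) as [Gs Hs].
  rewrite (div_normal_at_0 u x Gp Gq Gs Hnc Hp Hq Hs).
  apply is_lim_ext_loc with (f := fun L => div_normal u x Gp Gq Gs (/ sqrt L)).
  - exists 0. intros L HL0. symmetry. now apply HL_eq_div_normal.
  - apply is_lim_comp_continuous; [exact is_lim_inv_sqrt|].
    now apply div_normal_continuous.
Qed.
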